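(* Let $\mathcal{P}$ be the memory erasure protocol described in the context, and let $\pi$ be the projection removing time-stamps, $\pi((t_1,e_1)\cdots(t_n,e_n)) = e_1\cdots e_n$. For every $\bar\tau\in\pi(\mathrm{Tr}(\mathcal{P}))$, all agents $a,b$ and all messages $n,m,c$: if $r = h(k(a,b), n, m, c)$, $\mathrm{claim}_a(\mathrm{erasure}, b, r)$ occurs in $\bar\tau$ and $a\in\mathrm{Honest}$, then there exist indices $i<k<j$ in $\{1,\dots,|\bar\tau|\}$ and an agent $b'$ such that $\bar\tau_i = \mathrm{send}_a(c)$, $\bar\tau_k = \mathrm{send}_{b'}(r)$, $\bar\tau_j = \mathrm{recv}_a(r)$, and either $b' = b$ or $\{b,b'\}\subseteq\mathrm{Dishonest}$.
   Context: Symbolic model. Messages are terms of a term algebra over a signature $\Sigma$, variables and a set of constants $\mathrm{Const}$. The set $\mathrm{Agent}\subseteq\mathrm{Const}$ is partitioned into $\mathrm{Honest}$ and $\mathrm{Dishonest}$; $\mathrm{Nonce}\subseteq\mathrm{Const}$ is partitioned into sets $\mathrm{Nonce}_a$, $a\in\mathrm{Agent}$. $\Sigma$ contains pairing $\langle m,m'\rangle$, symmetric encryption $\{m\}_k$, $k(a,b)$ (long-term shared key of $a,b$), a MAC symbol and a hash symbol $h$. Events: $\mathrm{send}_a(m)$, $\mathrm{recv}_a(m)$, $\mathrm{claim}_a(\psi,m)$, with actor $a$. A trace is a finite sequence of time-stamped events $(t,e)$, $t\in\mathbb{R}$; $\max(\tau)$ is its largest time-stamp. Inference $a\vdash_\tau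 m$ is the least relation closed under: (I1) $a\vdash_\tau m$ for $m\in(\mathrm{Const}\setminus\mathrm{Nonce})\cup\mathrm{Nonce}_a$; (I2) $a\vdash_\tau(k(a,b),k(b,a))$; (I3) closure under all $f\in\Sigma\setminus\{k\}$; (I4) $(t,\mathrm{recv}_a(m))\in\tau$ gives $a\vdash_\tau m$; (I5) unpairing; (I6) from $a\vdash_\tau\{x\}_y$ and $a\vdash_\tau y$ infer $a\vdash_\tau x$. With a distance function $d$ and channel speed $\mathsf{c}$, $\mathrm{Tr}(\mathcal{P})$ is the least set closed under the protocol rules and: (Start) $\epsilon\in\mathrm{Tr}(\mathcal{P})$; (Net) if $\tau\in\mathrm{Tr}(\mathcal{P})$, $(t,\mathrm{send}_a(m))\in\tau$, $t'\ge\max(\tau)$, $d(a,b)\le\frac{\mathsf{c}}{2}(t'-t)$ then $\tau\cdot(t',\mathrm{recv}_b(m))\in\mathrm{Tr}(\mathcal{P})$; (Adv) if $\tau\in\mathrm{Tr}(\mathcal{P})$, $a\in\mathrm{Dishonest}$, $t\ge\max(\tau)$, $a\vdash_\tau m$ then $\tau\cdot(t,\mathrm{send}_a(m))\in\mathrm{Tr}(\mathcal{P})$. Freshly chosen nonces are assumed not to occur earlier in the trace. The protocol $\mathcal{P}$ (honest prover $P$, honest verifier $V$, shared key $k=k(V,P)$, time bound parameter $\Delta$): $P$ sends a fresh nonce $N_P\in\mathrm{Nonce}_P$; upon receiving $N_P$, $V$ chooses a fresh $N_V\in\mathrm{Nonce}_V$ and sends $N_V$ together with a MAC under $k$ of $(N_P,N_V)$;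 $P$, upon receiving a correct MAC, accepts; $V$ then sends a fresh challenge nonce $C$ at time $t_0$; upon receiving $C$, $P$ sends $r=h(k,N_P,N_V,C)$; upon receiving $r$ at time $t_1$ with $t_1-t_0\le\Delta$ and $r=h(k(V,P),N_P,N_V,C)$, $V$ emits $\mathrm{claim}_V(\mathrm{erasure},P,r)$. *)

From Stdlib Require Import Reals List.
Import ListNotations.
Open Scope R_scope.

Definition Agent := nat.

Inductive Msg : Type :=
| MVar   : nat -> Msg
| MAgent : Agent -> Msg
| MNonce : Agent -> nat -> Msg     (* MNonce a i ∈ Nonce_a  (Nonce ⊆ Const) *)
| MConst : nat -> Msg
| MPair  : Msg -> Msg -> Msg
| MEnc   : Msg -> Msg -> Msg       (* MEnc m k = {m}_k *)
| MKey   : Msg -> Msg -> Msg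
| MMac   : Msg -> Msg -> Msg       (* MMac k m = MAC of m under key k *)
| MHash  : Msg -> Msg.

Definition key (a b : Agent) : Msg := MKey (MAgent a) (MAgent b).

Definition h4 (x1 x2 x3 x4 : Msg) : Msg :=
  MHash (MPair x1 (MPair x2 (MPair x3 x4))).

Inductive subterm (s : Msg) : Msg -> Prop :=
| st_refl : subterm s s
| st_pair_l : forall x y, subterm s x -> subterm s (MPair x y)
| st_pair_r : forall x y, subterm s y -> subterm s (MPair x y)
| st_enc_l : forall x y, subterm s x -> subterm s (MEnc x y)
| st_enc_r : forall x y, subterm s y -> subterm s (MEnc x y)
| st_key_l : forall x y, subterm s x -> subterm s (MKey x y)
| st_key_r : forall x y, subterm s y -> subterm s (MKey x y)
| st_mac_l : forall x y, subterm s x -> subterm s (MMac x y)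
| st_mac_r : forall x y, subterm s y -> subterm s (MMac x y)
| st_hash : forall x, subterm s x -> subterm s (MHash x).

Inductive ClaimLabel : Type := Erasure.

Inductive Event : Type :=
| Send  : Agent -> Msg -> Event
| Recv  : Agent -> Msg -> Event
| Claim : Agent -> ClaimLabel -> Msg -> Event.

Definition event_msg (e : Event) : Msg :=
  match e with Send _ m | Recv _ m | Claim _ _ m => m end.

(** timed traces, in chronological order (τ · e  is  τ ++ [e]) *)
Definition Trace := list (R * Event).

Definition ge_max (t : R) (tau : Trace) : Prop :=
  forall t0 e, In (t0, e) tau -> t0 <= t.

Definition fresh (n : Msg) (tau : Trace) : Prop :=
  forall te, In te tau -> ~ subterm n (event_msg (snd te)).

Inductive derives (a : Agent) (tau : Trace) : Msg -> Prop :=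
| I1_agent : forall b, derives a tau (MAgent b)
| I1_const : forall n, derives a tau (MConst n)
| I1_nonce : forall i, derives a tau (MNonce a i)
| I2_key1  : forall b, derives a tau (key a b)
| I2_key2  : forall b, derives a tau (key b a)
| I3_pair  : forall x y, derives a tau x -> derives a tau y -> derives a tau (MPair x y)
| I3_enc   : forall x y, derives a tau x -> derives a tau y -> derives a tau (MEnc x y)
| I3_mac   : forall x y, derives a tau x -> derives a tau y -> derives a tau (MMac x y)
| I3_hash  : forall x, derives a tau x -> derives a tau (MHash x)
| I4_recv  : forall t m, In (t, Recv a m) tau -> derives a tau m
| I5_fst   : forall x y, derives a tau (MPair x y) -> derives a tau x
| I5_snd   : forall x y, derives a tau (MPair x y) -> derives a tau y
| I6_dec   : forall x y, derives a tau (MEnc x y) -> derives a tau y -> derives a tau x.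

(** Local states of protocol threads.  The last [nat] field records the
   position in the trace at which the thread may continue (messages it
   reacts to must be received at or after this position). *)
Inductive Thread : Type :=
  (* prover P (with verifier V) has sent N_P, waits for the MAC *)
| PWait (P V : Agent) (NP : Msg) (pos : nat)
  (* prover P has accepted the MAC, waits for the challenge *)
| PAcc (P V : Agent) (NP NV : Msg) (pos : nat)
  (* verifier V (with prover P) has sent N_V and the MAC, will send C *)
| VWait (V P : Agent) (NP NV : Msg) (pos : nat)
  (* verifier V has sent the challenge C at time t0, waits for r *)
| VChal (V P : Agent) (NP NV C : Msg) (t0 : R) (pos : nat).

Section Semantics.
Variables (Honest : Agent -> Prop) (d : Agent -> Agent -> R) (c Delta : R).

Inductive Reach : Trace -> list Thread -> Prop :=
| R_start : Reach [] []
| R_P1 : forall tau th P V i t,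
    Reach tau th -> ge_max t tau -> fresh (MNonce P i) tau ->
    Reach (tau ++ [(t, Send P (MNonce P i))])
          (PWait P V (MNonce P i) (S (length tau)) :: th)
| R_V1 : forall tau th V P idx t1 NP j t,
    Reach tau th -> nth_error tau idx = Some (t1, Recv V NP) ->
    ge_max t tau -> fresh (MNonce V j) tau ->
    Reach (tau ++ [(t, Send V (MPair (MNonce V j)
                                     (MMac (key V P) (MPair NP (MNonce V j)))))])
          (VWait V P NP (MNonce V j) (S (length tau)) :: th)
| R_P2 : forall tau th1 th2 P V NP pos idx t1 NV,
    Reach tau (th1 ++ PWait P V NP pos :: th2) ->
    (pos <= idx)%nat ->
    nth_error tau idx = Some (t1, Recv P (MPair NV (MMac (key V P) (MPair NP NV)))) ->
    Reach tau (th1 ++ PAcc P V NP NV (S idx) :: th2)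
| R_V2 : forall tau th1 th2 V P NP NV pos j t0,
    Reach tau (th1 ++ VWait V P NP NV pos :: th2) ->
    ge_max t0 tau -> fresh (MNonce V j) tau ->
    Reach (tau ++ [(t0, Send V (MNonce V j))])
          (th1 ++ VChal V P NP NV (MNonce V j) t0 (S (length tau)) :: th2)
| R_P3 : forall tau th1 th2 P V NP NV pos idx t1 C t,
    Reach tau (th1 ++ PAcc P V NP NV pos :: th2) ->
    (pos <= idx)%nat ->
    nth_error tau idx = Some (t1, Recv P C) ->
    ge_max t tau ->
    Reach (tau ++ [(t, Send P (h4 (key V P) NP NV C))]) (th1 ++ th2)
| R_V3 : forall tau th1 th2 V P NP NV C t0 pos idx t1 r t,
    Reach tau (th1 ++ VChal V P NP NV C t0 pos :: th2) ->
    (pos <= idx)%nat ->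
    nth_error tau idx = Some (t1, Recv V r) ->
    t1 - t0 <= Delta ->
    r = h4 (key V P) NP NV C ->
    ge_max t tau ->
    Reach (tau ++ [(t, Claim V Erasure (MPair (MAgent P) r))]) (th1 ++ th2)
| R_Net : forall tau th t a m t' b,
    Reach tau th -> In (t, Send a m) tau -> ge_max t' tau ->
    d a b <= c / 2 * (t' - t) ->
    Reach (tau ++ [(t', Recv b m)]) th
| R_Adv : forall tau th a t m,
    Reach tau th -> ~ Honest a -> ge_max t tau -> derives a tau m ->
    Reach (tau ++ [(t, Send a m)]) th.

Definition Tr (tau : Trace) : Prop := exists th, Reach tau th.

End Semantics.

Definition proj (tau : Trace) : list Event := map snd tau.

From Stdlib Require Import Reals List Lia Classical.
Import ListNotations.
Open Scope R_scope.

(** The proof has three ingredients.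
   - Reachability invariants ([reach_invariant]): every received message was
     sent earlier, and every claim is justified by the verifier thread that
     produced it: a fresh nonce challenge [C] sent at [i] and the response
     [h(k(a,b), NP, NV, C)] received at [j > i].
   - Freshness: a message containing [C] cannot be sent before [i]
     ([challenge_precedes_response]).
   - Origin of keyed hashes ([hash_authentic]): if [b] is honest, the key
     [k(a,b)] never becomes extractable by the intruder ([key_secrecy]), so
     every hash [h(k(a,b), _)] in the trace was first sent by [b]
     ([hash_origin]); if [b] is dishonest, honest agents only send such a
     hash as [b] ([hash_sender_role]).
   The main theorem combines them around the send that precedes the receive
   of the response. *)

Lemma nth_error_app_old {A : Type} (l l' : list A) (p : nat) (x : A) :
  nth_error l p = Some x -> nth_error (l ++ l') p = Some x.
Proof.
  intros Hp. rewrite nth_error_app1; [exact Hp |].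
  apply nth_error_Some. congruence.
Qed.

Lemma nth_error_snoc_last {A : Type} (l : list A) (x : A) :
  nth_error (l ++ [x]) (length l) = Some x.
Proof. rewrite nth_error_app2, Nat.sub_diag; reflexivity. Qed.

Lemma nth_error_snoc_inv {A : Type} (l : list A) (e x : A) (p : nat) :
  nth_error (l ++ [e]) p = Some x ->
  nth_error l p = Some x \/ (p = length l /\ x = e).
Proof.
  intros Hp. destruct (Nat.lt_ge_cases p (length l)) as [Hlt | Hge].
  - left. rewrite nth_error_app1 in Hp; assumption.
  - right. rewrite nth_error_app2 in Hp by assumption.
    destruct (p - length l)%nat as [| k] eqn:E; simpl in Hp.
    + split; [lia | congruence].
    + destruct k; discriminate.
Qed.

Lemma firstn_app_prefix {A : Type} (l l' : list A) (i : nat) :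
  (i <= length l)%nat -> firstn i (l ++ l') = firstn i l.
Proof.
  intros Hi. rewrite firstn_app.
  replace (i - length l)%nat with 0%nat by lia. apply app_nil_r.
Qed.

Lemma fresh_first_occurrence (x : Msg) (tau : Trace) (i q : nat) (t : R) (e : Event) :
  fresh x (firstn i tau) -> nth_error tau q = Some (t, e) ->
  subterm x (event_msg e) -> (i <= q)%nat.
Proof.
  intros Hfresh Hq Hx. destruct (Nat.lt_ge_cases q i) as [Hlt | Hge]; [| exact Hge].
  exfalso. apply (Hfresh (t, e)); [| exact Hx].
  apply nth_error_In with q. rewrite nth_error_firstn.
  apply Nat.ltb_lt in Hlt. rewrite Hlt. exact Hq.
Qed.

Lemma nth_error_proj (tau : Trace) (p : nat) (t : R) (e : Event) :
  nth_error tau p = Some (t, e) -> nth_error (proj tau) p = Some e.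
Proof. intros Hp. unfold proj. rewrite nth_error_map, Hp. reflexivity. Qed.

Lemma subterm_trans (s m m' : Msg) : subterm s m -> subterm m m' -> subterm s m'.
Proof. intros Hs Hm. induction Hm; auto; constructor; assumption. Qed.

Lemma subterm_pair_inv (s x y : Msg) :
  subterm s (MPair x y) -> s = MPair x y \/ subterm s x \/ subterm s y.
Proof. intros H; inversion H; auto. Qed.

Lemma subterm_mac_inv (s x y : Msg) :
  subterm s (MMac x y) -> s = MMac x y \/ subterm s x \/ subterm s y.
Proof. intros H; inversion H; auto. Qed.

Lemma subterm_hash_inv (s x : Msg) : subterm s (MHash x) -> s = MHash x \/ subterm s x.
Proof. intros H; inversion H; auto. Qed.

Lemma hash_not_in_nonce (p : Msg) (a : Agent) (i : nat) : ~ subterm (MHash p) (MNonce a i).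
Proof. intros H. inversion H. Qed.

Lemma hash_not_in_key (p : Msg) (a b : Agent) : ~ subterm (MHash p) (key a b).
Proof.
  intros H. unfold key in H.
  inversion H; subst; match goal with Ha : subterm _ (MAgent _) |- _ => inversion Ha end.
Qed.

(** The parts of a message: what can be extracted from it by projection and
    decryption; keys, MAC and hash arguments are not parts. *)
Inductive in_parts (s : Msg) : Msg -> Prop :=
| parts_refl : in_parts s s
| parts_pair_l : forall x y, in_parts s x -> in_parts s (MPair x y)
| parts_pair_r : forall x y, in_parts s y -> in_parts s (MPair x y)
| parts_enc : forall x y, in_parts s x -> in_parts s (MEnc x y).

Lemma derives_key_origin (x : Agent) (tau : Trace) (m : Msg) :
  derives x tau m -> forall a b, in_parts (key a b) m ->
  x = a \/ x = b \/ exists t m', In (t, Recv x m') tau /\ in_parts (key a b) m'.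
Proof.
  induction 1; intros a' b' Hk; unfold key in *.
  all: solve [inversion Hk; subst; eauto 6 using in_parts].
Qed.

Lemma derives_hash_origin (x : Agent) (tau : Trace) (m : Msg) :
  derives x tau m -> forall p, subterm (MHash p) m ->
  (exists t m', In (t, Recv x m') tau /\ subterm (MHash p) m') \/ derives x tau p.
Proof.
  induction 1; intros q Hq.
  all: try solve [inversion Hq; subst; eauto using subterm].
  - exfalso; apply (hash_not_in_key q x b Hq).
  - exfalso; apply (hash_not_in_key q b x Hq).
Qed.

Definition nonce_of (a : Agent) (n : Msg) : Prop := exists i, n = MNonce a i.

Definition sent_before (tau : Trace) (p : nat) (m : Msg) : Prop :=
  exists q t y, (q < p)%nat /\ nth_error tau q = Some (t, Send y m).

(** What the verifier [V] has seen when it claims erasure for [P] with [r]. *)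
Definition claim_justified (tau : Trace) (V P : Agent) (r : Msg) : Prop :=
  exists NP NV C i j ti tj,
    r = h4 (key V P) NP NV C /\ (i < j)%nat /\
    nth_error tau i = Some (ti, Send V C) /\ nth_error tau j = Some (tj, Recv V r) /\
    nonce_of V C /\ fresh C (firstn i tau).

Definition event_ok (tau : Trace) (p : nat) (e : Event) : Prop :=
  match e with
  | Send _ _ => True
  | Recv _ m => sent_before tau p m
  | Claim V _ msg => exists P r, msg = MPair (MAgent P) r /\ claim_justified tau V P r
  end.

Definition events_ok (tau : Trace) : Prop :=
  forall p t e, nth_error tau p = Some (t, e) -> event_ok tau p e.

Definition thread_ok (tau : Trace) (T : Thread) : Prop :=
  match T with
  | PWait P _ NP _ => nonce_of P NP
  | PAcc P _ NP NV _ =>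
      nonce_of P NP /\
      exists idx t X, nth_error tau idx = Some (t, Recv P X) /\ subterm NV X
  | VWait _ _ _ _ _ => True
  | VChal V _ _ _ C _ pos =>
      exists i t, pos = S i /\ nth_error tau i = Some (t, Send V C) /\
                  nonce_of V C /\ fresh C (firstn i tau)
  end.

Lemma fresh_firstn_app (x : Msg) (tau l : Trace) (i : nat) (ti : R) (e : Event) :
  nth_error tau i = Some (ti, e) ->
  fresh x (firstn i tau) -> fresh x (firstn i (tau ++ l)).
Proof.
  intros Hi Hfresh. rewrite firstn_app_prefix; [exact Hfresh |].
  apply Nat.lt_le_incl, nth_error_Some. congruence.
Qed.

(** Both invariants only speak about existing positions, so they survive
    extensions of the trace. *)
Lemma claim_justified_app (tau l : Trace) (V P : Agent) (r : Msg) :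
  claim_justified tau V P r -> claim_justified (tau ++ l) V P r.
Proof.
  intros (NP & NV & C & i & j & ti & tj & Hr & Hij & Hi & Hj & Hn & Hf).
  exists NP, NV, C, i, j, ti, tj.
  repeat split; eauto using nth_error_app_old, fresh_firstn_app.
Qed.

Lemma event_ok_app (tau l : Trace) (p : nat) (e : Event) :
  event_ok tau p e -> event_ok (tau ++ l) p e.
Proof.
  destruct e as [y m | y m | V lab msg]; simpl; [trivial | |].
  - intros (q & t & z & Hq & Hs). exists q, t, z. eauto using nth_error_app_old.
  - intros (P & r & Hmsg & Hj). exists P, r. eauto using claim_justified_app.
Qed.

Lemma thread_ok_app (tau l : Trace) (T : Thread) :
  thread_ok tau T -> thread_ok (tau ++ l) T.
Proof.
  destruct T; simpl; trivial.
  - intros [Hn (idx & t & X & Hx & Hs)]. eauto 7 using nth_error_app_old.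
  - intros (i & t & Hpos & Hi & Hn & Hf).
    exists i, t. eauto 7 using nth_error_app_old, fresh_firstn_app.
Qed.

Lemma events_ok_snoc (tau : Trace) (t : R) (e : Event) :
  events_ok tau -> event_ok tau (length tau) e -> events_ok (tau ++ [(t, e)]).
Proof.
  intros Hall He p t' e' Hp. apply event_ok_app.
  destruct (nth_error_snoc_inv _ _ _ _ Hp) as [Hold | [-> Heq]].
  - exact (Hall _ _ _ Hold).
  - injection Heq as _ ->. exact He.
Qed.

Lemma Forall_replace {A : Type} (P : A -> Prop) (l1 l2 : list A) (x y : A) :
  Forall P (l1 ++ x :: l2) -> P y -> Forall P (l1 ++ y :: l2).
Proof. rewrite !Forall_app, !Forall_cons_iff. tauto. Qed.

Lemma Forall_remove {A : Type} (P : A -> Prop) (l1 l2 : list A) (x : A) :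
  Forall P (l1 ++ x :: l2) -> Forall P (l1 ++ l2).
Proof. rewrite !Forall_app, !Forall_cons_iff. tauto. Qed.

Definition hash_originates (b : Agent) (hsh : Msg) (tau : Trace) : Prop :=
  forall p t y m, nth_error tau p = Some (t, Send y m) -> subterm hsh m ->
  exists q t', (q <= p)%nat /\ nth_error tau q = Some (t', Send b hsh).

Lemma received_hash_originates (b : Agent) (hsh : Msg) (tau l : Trace) (idx : nat)
    (t : R) (y : Agent) (X : Msg) :
  events_ok tau -> hash_originates b hsh tau ->
  nth_error tau idx = Some (t, Recv y X) -> subterm hsh X ->
  exists q t', (q <= length tau)%nat /\ nth_error (tau ++ l) q = Some (t', Send b hsh).
Proof.
  intros Hev Horig Hidx Hs.
  destruct (Hev _ _ _ Hidx) as (p & tp & yp & Hp & Hsend).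
  destruct (Horig _ _ _ _ Hsend Hs) as (q & tq & Hq & Hqsend).
  assert (Hlen : (idx < length tau)%nat) by (apply nth_error_Some; congruence).
  exists q, tq. split; [lia | apply nth_error_app_old, Hqsend].
Qed.

Section Reachable.
Variables (Honest : Agent -> Prop) (d : Agent -> Agent -> R) (c Delta : R).

Lemma reach_invariant (tau : Trace) (th : list Thread) :
  Reach Honest d c Delta tau th -> events_ok tau /\ Forall (thread_ok tau) th.
Proof.
  induction 1 as
    [ | tau th P V i t HR [Hev Hth] Hge Hfr
      | tau th V P idx t1 NP j t HR [Hev Hth] Hn Hge Hfr
      | tau th1 th2 P V NP pos idx t1 NV HR [Hev Hth] Hle Hn
      | tau th1 th2 V P NP NV pos j t0 HR [Hev Hth] Hge Hfr
      | tau th1 th2 P V NP NV pos idx t1 C t HR [Hev Hth] Hle Hn Hge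
      | tau th1 th2 V P NP NV C t0 pos idx t1 r t HR [Hev Hth] Hle Hn Hd Hr Hge
      | tau th t a m t' b HR [Hev Hth] Hin Hge Hd
      | tau th a t m HR [Hev Hth] Hh Hge Hder ].
  - split; [intros [] ? ? ?; discriminate | constructor].
  - split; [apply events_ok_snoc; simpl; trivial |].
    constructor; [exists i; reflexivity |].
    eapply Forall_impl; [apply thread_ok_app | exact Hth].
  - split; [apply events_ok_snoc; simpl; trivial |].
    constructor; [exact I |].
    eapply Forall_impl; [apply thread_ok_app | exact Hth].
  - (* the prover accepts: its NV is part of the received message *)
    split; [exact Hev |].
    apply (Forall_replace _ _ _ _ _ Hth); simpl.
    split; [exact (Forall_elt _ _ _ Hth) |].
    exists idx, t1, (MPair NV (MMac (key V P) (MPair NP NV))).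
    split; [exact Hn | apply st_pair_l, st_refl].
  - (* the challenge is fresh in the whole trace before its send *)
    split; [apply events_ok_snoc; simpl; trivial |].
    apply (Forall_replace _ _ _ (VWait V P NP NV pos)).
    + eapply Forall_impl; [apply thread_ok_app | exact Hth].
    + exists (length tau), t0.
      split; [reflexivity |]. split; [apply nth_error_snoc_last |].
      split; [exists j; reflexivity |].
      rewrite firstn_app_prefix, firstn_all; [exact Hfr | lia].
  - split; [apply events_ok_snoc; simpl; trivial |].
    eapply Forall_impl; [apply thread_ok_app | exact (Forall_remove _ _ _ _ Hth)].
  - (* the claim is justified by the verifier thread it consumes *)
    split.
    + apply events_ok_snoc; [exact Hev |]. exists P, r. split; [reflexivity |].
      destruct (Forall_elt _ _ _ Hth) as (i & ti & -> & Hi & Hnonce & Hf).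
      exists NP, NV, C, i, idx, ti, t1. repeat split; auto.
    + eapply Forall_impl; [apply thread_ok_app | exact (Forall_remove _ _ _ _ Hth)].
  -
    split; [apply events_ok_snoc; [exact Hev |] |].
    + apply In_nth_error in Hin as [q Hq]. exists q, t, a.
      split; [apply nth_error_Some; congruence | exact Hq].
    + eapply Forall_impl; [apply thread_ok_app | exact Hth].
  - split; [apply events_ok_snoc; simpl; trivial |].
    eapply Forall_impl; [apply thread_ok_app | exact Hth].
Qed.

Lemma received_was_sent (tau : Trace) (th : list Thread) (t : R) (x : Agent) (m : Msg) :
  Reach Honest d c Delta tau th -> In (t, Recv x m) tau ->
  exists t' y, In (t', Send y m) tau.
Proof.
  intros HR Hin. apply In_nth_error in Hin as [p Hp].
  destruct (proj1 (reach_invariant _ _ HR) _ _ _ Hp) as (q & t' & y & _ & Hq).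
  exists t', y. eapply nth_error_In; exact Hq.
Qed.

Lemma claim_in_projection (tau : Trace) (th : list Thread) (V P : Agent) (r : Msg) :
  Reach Honest d c Delta tau th ->
  In (Claim V Erasure (MPair (MAgent P) r)) (proj tau) -> claim_justified tau V P r.
Proof.
  intros HR Hin. unfold proj in Hin.
  apply in_map_iff in Hin as [[t e] [He Hin]]; simpl in He; subst e.
  apply In_nth_error in Hin as [p Hp].
  destruct (proj1 (reach_invariant _ _ HR) _ _ _ Hp) as (P' & r' & Hmsg & Hjust).
  injection Hmsg as -> ->. exact Hjust.
Qed.

(** The shared key of two honest agents is never a part of a sent message:
    honest agents only send it under a MAC or a hash, and the intruder could
    only extract it from a message already sent. *)
Lemma key_secrecy (a b : Agent) (tau : Trace) (th : list Thread) :
  Honest a -> Honest b -> Reach Honest d c Delta tau th ->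
  forall t y m, In (t, Send y m) tau -> ~ in_parts (key a b) m.
Proof.
  intros Ha Hb HR.
  induction HR as
    [ | | | | | | | | tau th x t m HR IHHR Hdis Hge Hder ];
    intros ts ys ms Hin Hparts.
  all: try solve [eapply IHHR; eassumption | destruct Hin].
  all: apply in_app_or in Hin as [Hin | [Hin | []]];
         [eapply IHHR; eassumption | inversion Hin; subst].
  all: unfold key, h4 in Hparts.
  all: try solve [inversion Hparts; subst;
                  repeat match goal with
                         | H : in_parts _ (MNonce _ _) |- _ => inversion H
                         | H : in_parts _ (MMac _ _) |- _ => inversion H
                         end].
  destruct (derives_key_origin _ _ _ Hder a b Hparts)
    as [-> | [-> | (t2 & m2 & Hr & Hp2)]]; [contradiction | contradiction |].
  destruct (received_was_sent _ _ _ _ _ HR Hr) as (t3 & y3 & Hs).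
  eapply IHHR; eassumption.
Qed.

Lemma hash_sender_role (a b : Agent) (z : Msg) (tau : Trace) (th : list Thread) :
  Reach Honest d c Delta tau th ->
  forall t y, In (t, Send y (MHash (MPair (key a b) z))) tau -> y = b \/ ~ Honest y.
Proof.
  induction 1; intros ts ys Hin.
  all: try solve [eapply IHReach; eassumption | destruct Hin].
  all: apply in_app_or in Hin as [Hin | [Hin | []]];
         [eapply IHReach; eassumption | inversion Hin; subst].
  - unfold key in *. left; congruence.
  - right; assumption.
Qed.

(** With [a] and [b] honest, every hash keyed with [k(a,b)] is first sent by
    [b]: honest agents only forward hashes they received or build it as [b],
    and the intruder cannot build it since it cannot learn the key. *)
Lemma hash_origin (a b : Agent) (z : Msg) (tau : Trace) (th : list Thread) :
  Honest a -> Honest b -> Reach Honest d c Delta tau th ->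
  hash_originates b (MHash (MPair (key a b) z)) tau.
Proof.
  intros Ha Hb HR.
  induction HR as
    [ | tau th P V i t HR IHHR Hge Hfr
      | tau th V P idx t1 NP j t HR IHHR Hrecv Hge Hfr
      | tau th1 th2 P V NP pos idx t1 NV HR IHHR Hle Hrecv
      | tau th1 th2 V P NP NV pos j t0 HR IHHR Hge Hfr
      | tau th1 th2 P V NP NV pos idx t1 C t HR IHHR Hle Hrecv Hge
      | tau th1 th2 V P NP NV C t0 pos idx t1 r t HR IHHR Hle Hrecv Hd Hr Hge
      | tau th t a' m t' b' HR IHHR Hin Hge Hd
      | tau th x t m HR IHHR Hdis Hge Hder ];
    intros p ts ys ms Hp Hs.
  all: try solve [eapply IHHR; eassumption | destruct p; discriminate].
  all: destruct (nth_error_snoc_inv _ _ _ _ Hp) as [Hold | [-> Hnew]];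
    [ destruct (IHHR _ _ _ _ Hold Hs) as (q & tq & Hq & Hqs);
      exists q, tq; split; [exact Hq | apply nth_error_app_old, Hqs] | ].
  all: inversion Hnew; subst; clear Hnew.
  all: destruct (reach_invariant _ _ HR) as [Hev Hth].
  - exfalso. eapply hash_not_in_nonce; eassumption.
  - (* verifier's MAC message: the hash can only sit inside the received NP *)
    destruct (subterm_pair_inv _ _ _ Hs) as [E | [Hn | Hm]];
      [discriminate | exfalso; eapply hash_not_in_nonce; eassumption |].
    destruct (subterm_mac_inv _ _ _ Hm) as [E | [Hk | Hm']];
      [discriminate | exfalso; eapply hash_not_in_key; eassumption |].
    destruct (subterm_pair_inv _ _ _ Hm') as [E | [HNP | Hn]];
      [discriminate | eapply received_hash_originates; eassumption |
       exfalso; eapply hash_not_in_nonce; eassumption].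
  - exfalso. eapply hash_not_in_nonce; eassumption.
  - (* prover's response: either the hash itself, sent by P = b, or inside
       the received NV or C *)
    destruct (Forall_elt _ _ _ Hth) as [[i ->] (idx' & t' & X & HX & HNV)].
    unfold h4 in Hs. destruct (subterm_hash_inv _ _ Hs) as [E | Hin].
    + unfold key in E. injection E as -> -> ->.
      exists (length tau), t. split; [lia | apply nth_error_snoc_last].
    + destruct (subterm_pair_inv _ _ _ Hin) as [E | [Hk | Hrest]];
        [discriminate | exfalso; eapply hash_not_in_key; eassumption |].
      destruct (subterm_pair_inv _ _ _ Hrest) as [E | [HNP | Hrest']];
        [discriminate | exfalso; eapply hash_not_in_nonce; eassumption |].
      destruct (subterm_pair_inv _ _ _ Hrest') as [E | [HNV' | HC]]; [discriminate | |].
      * apply (received_hash_originates _ _ _ _ _ _ _ _ Hev IHHR HX).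
        eapply subterm_trans; eassumption.
      * exact (received_hash_originates _ _ _ _ _ _ _ _ Hev IHHR Hrecv HC).
  - (* intruder: the hash was received, or its key was derivable *)
    destruct (derives_hash_origin _ _ _ Hder _ Hs) as [(t2 & m2 & Hr & Hs2) | Hpayload].
    + apply In_nth_error in Hr as [idx Hidx].
      eapply received_hash_originates; eassumption.
    + apply I5_fst in Hpayload. exfalso.
      destruct (derives_key_origin _ _ _ Hpayload a b (parts_refl _))
        as [-> | [-> | (t2 & m2 & Hr & Hp2)]]; [contradiction | contradiction |].
      destruct (received_was_sent _ _ _ _ _ HR Hr) as (t3 & y3 & Hs3).
      exact (key_secrecy _ _ _ _ Ha Hb HR _ _ _ Hs3 Hp2).
Qed.

Lemma hash_authentic (a b : Agent) (z : Msg) (tau : Trace) (th : list Thread)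
    (k : nat) (t : R) (y : Agent) :
  Honest a -> Reach Honest d c Delta tau th ->
  nth_error tau k = Some (t, Send y (MHash (MPair (key a b) z))) ->
  exists q t' b', (q <= k)%nat /\
    nth_error tau q = Some (t', Send b' (MHash (MPair (key a b) z))) /\
    (b' = b \/ (~ Honest b /\ ~ Honest b')).
Proof.
  intros Ha HR Hk. destruct (classic (Honest b)) as [Hb | Hb].
  - destruct (hash_origin _ _ _ _ _ Ha Hb HR _ _ _ _ Hk (st_refl _)) as (q & t' & Hq & Hqs).
    exists q, t', b. auto.
  - exists k, t, y. split; [lia | split; [exact Hk |]].
    destruct (hash_sender_role _ _ _ _ _ HR t y (nth_error_In _ _ Hk)); auto.
Qed.

End Reachable.

Lemma challenge_precedes_response (tau : Trace) (V y : Agent) (C k NP NV : Msg)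
    (i q : nat) (ti tq : R) :
  nth_error tau i = Some (ti, Send V C) -> nonce_of V C -> fresh C (firstn i tau) ->
  nth_error tau q = Some (tq, Send y (h4 k NP NV C)) -> (i < q)%nat.
Proof.
  intros Hi [n ->] Hfresh Hq.
  assert (Hle : (i <= q)%nat).
  { apply (fresh_first_occurrence _ _ _ _ _ _ Hfresh Hq).
    unfold h4. apply st_hash, st_pair_r, st_pair_r, st_pair_r, st_refl. }
  destruct (Nat.eq_dec i q) as [-> | Hne]; [| lia].
  rewrite Hi in Hq. discriminate.
Qed.

Theorem mainTheorem2 :
  forall (Honest : Agent -> Prop) (d : Agent -> Agent -> R) (c Delta : R)
         (trb : list Event),
    (exists tau, Tr Honest d c Delta tau /\ trb = proj tau) ->
    forall (a b : Agent) (n m cc r : Msg),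
      r = h4 (key a b) n m cc ->
      In (Claim a Erasure (MPair (MAgent b) r)) trb ->
      Honest a ->
      exists (i k j : nat) (b' : Agent),
        (i < k)%nat /\ (k < j)%nat /\ (j < length trb)%nat /\
        nth_error trb i = Some (Send a cc) /\
        nth_error trb k = Some (Send b' r) /\
        nth_error trb j = Some (Recv a r) /\
        (b' = b \/ (~ Honest b /\ ~ Honest b')).
Proof.
  intros Honest d c Delta trb [tau [[th HR] ->]] a b n m cc r -> Hclaim Ha.
  destruct (claim_in_projection _ _ _ _ _ _ _ _ _ HR Hclaim)
    as (NP & NV & C & i & j & ti & tj & HrC & Hij & Hchal & Hresp & Hnonce & Hfresh).
  (* the checked response determines the challenge *)
  assert (cc = C) as <- by (injection HrC; auto).
  (* the response received at j was sent at some k0 < j ... *)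
  destruct (proj1 (reach_invariant _ _ _ _ _ _ HR) _ _ _ Hresp)
    as (k0 & t0 & y0 & Hk0 & Hsend).
  (* ... and no later by an authentic sender *)
  destruct (hash_authentic _ _ _ _ a b (MPair n (MPair m cc)) _ _ _ _ _ Ha HR Hsend)
    as (k & tk & b' & Hk & Hsendk & Hb').
  (* which needed the challenge *)
  pose proof (challenge_precedes_response _ _ _ _ (key a b) n m _ _ _ _
                Hchal Hnonce Hfresh Hsendk) as Hik.
  assert (Hj : (j < length tau)%nat) by (apply nth_error_Some; congruence).
  exists i, k, j, b'.
  repeat split; eauto using nth_error_proj; try lia.
  unfold proj. rewrite length_map. exact Hj.
Qed.
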